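(* Let $f\in\mathbb{C}[X,Y]$ be a quasi-convenient polynomial which is nondegenerate at infinity, and let $g,h\in\mathbb{C}[X,Y]$ be polynomials of positive degree that are coprime and both divide $f$ in $\mathbb{C}[X,Y]$. Then $g$ and $h$ are quasi-convenient and the pair $(g,h)$ is nondegenerate at infinity.
   Context: Write $f=\sum c_{\alpha\beta}X^\alpha Y^\beta\in\mathbb{C}[X,Y]$ and $\operatorname{supp} f=\{(\alpha,\beta)\in\mathbb{N}^2: c_{\alpha\beta}\neq 0\}$. A nonzero polynomial $f$ of positive degree is quasi-convenient if $c_{\alpha 0}\neq 0$ and $c_{0\beta}\neq 0$ for some integers $\alpha,\beta\ge 0$. For a nonzero real vector $\vec w=[p,q]$, let $d_{\vec w}(f)=\max\{p\alpha+q\beta:(\alpha,\beta)\in\operatorname{supp} f\}$ and $\operatorname{in}(f,\vec w)=\sum_{p\alpha+q\beta=d_{\vec w}(f)} c_{\alpha\beta}X^\alpha Y^\beta$. A quasi-convenient $f$ is nondegenerate at infinity if for every real vector $\vec w=[p,q]$ with $p>0$ or $q>0$ the system $\operatorname{in}(f,\vec w)=\frac{\partial}{\partial X}\operatorname{in}(f,\vec w)=\frac{\partial}{\partial Y}\operatorname{in}(f,\vec w)=0$ has no solutions in $\mathbb{C}^*\times\mathbb{C}^*$, where $\mathbb{C}^*=\mathbb{C}\setminus\{0\}$. A pair $(g,h)$ of quasi-convenient polynomials is nondegenerate at infinity if for every real vector $\vec w=[p,q]$ with $p>0$ or $q>0$ the system $\operatorname{in}(g,\vec w)=\operatorname{in}(h,\vec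 w)=0$ has no solutions in $\mathbb{C}^*\times\mathbb{C}^*$. *)

(* Bivariate polynomials C[X,Y] are {poly {poly C}} following
   mathcomp's polyXY convention: the OUTER variable is X ('X), the INNER
   variable is Y ('Y = 'X%:P), and p.[x, y] = p.[x%:P].[y]. *)
From HB Require Import structures.
From mathcomp Require Import all_boot all_order all_algebra polyXY.
Set Implicit Arguments. Unset Strict Implicit. Unset Printing Implicit Defensive.
Import Order.TTheory GRing.Theory Num.Theory.
Local Open Scope ring_scope.

Section Bivariate.
Variable C : numClosedFieldType.
Implicit Types f g h : {poly {poly C}}.

Definition xcoef f (a : nat) : {poly C} := f`_a.

Definition bcoef f (a b : nat) : C := (f`_a)`_b.

Definition tdeg f : nat :=
  (\max_(a < size f) \max_(b < size (xcoef f a) | bcoef f a b != 0%R) (a + b))%N.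

Definition quasi_convenient f : Prop :=
  f != 0 /\ (0 < tdeg f)%N /\
  (exists a : nat, bcoef f a 0 != 0) /\ (exists b : nat, bcoef f 0 b != 0).

Definition wdeg (p q : C) (a b : nat) : C := p * a%:R + q * b%:R.

Definition attains_max f (p q : C) (a b : nat) : bool :=
  \big[andb/true]_(a' < size f) \big[andb/true]_(b' < size (xcoef f a'))
     ((bcoef f a' b' != 0) ==> (wdeg p q a' b' <= wdeg p q a b)).

Definition init_form f (p q : C) : {poly {poly C}} :=
  \poly_(a < size f) \poly_(b < size (xcoef f a))
     (if (bcoef f a b != 0) && attains_max f p q a b then bcoef f a b else 0).

Definition dX f : {poly {poly C}} := f^`().
Definition dY f : {poly {poly C}} := map_poly (fun c : {poly C} => c^`()) f.

Definition weight_ok (p q : C) : Prop :=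
  p \is Num.real /\ q \is Num.real /\ (0 < p \/ 0 < q).

Definition nondeg_at_infinity f : Prop :=
  quasi_convenient f /\
  forall p q : C, weight_ok p q ->
    ~ exists x y : C, x != 0 /\ y != 0 /\
        (init_form f p q).[x, y] = 0 /\
        (dX (init_form f p q)).[x, y] = 0 /\
        (dY (init_form f p q)).[x, y] = 0.

Definition pair_nondeg_at_infinity g h : Prop :=
  quasi_convenient g /\ quasi_convenient h /\
  forall p q : C, weight_ok p q ->
    ~ exists x y : C, x != 0 /\ y != 0 /\
        (init_form g p q).[x, y] = 0 /\ (init_form h p q).[x, y] = 0.

Definition bdvd g f : Prop := exists k : {poly {poly C}}, f = k * g.
Definition bcoprime g h : Prop :=
  forall d : {poly {poly C}}, bdvd d g -> bdvd d h -> d \is a GRing.unit.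

End Bivariate.

From HB Require Import structures.
From mathcomp Require Import all_boot all_order all_algebra polyXY ring.
From Stdlib Require Import Classical_Prop.
Import Order.TTheory GRing.Theory Num.Theory.
Local Open Scope ring_scope.
Set Implicit Arguments. Unset Strict Implicit.

(* 1. Unique factorization, replaced by a Gauss lemma over C[Y]: every nonzero
      polynomial is c * D with c in C[Y] and D primitive (no factor Y - a), a
      primitive factor of s * A (s in C[Y]) divides A, and a coprime pair g, D
      generates a nonzero r = u g + v D of C[Y] (essentially the resultant).
      Hence two coprime divisors g, h of f satisfy f = n * h * g.
   2. For a real weight w, taking the initial form is multiplicative:
      in(A * B, w) = in(A, w) * in(B, w).
   3. A common zero of two factors is a singular point of the product.

   If in(g, w) and in(h, w) had a common zero with nonzero coordinates, then
   by 2 it would be a common zero of in(n, w) in(h, w) in(g, w) = in(f, w),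
   and by 3 a singular point of in(f, w), contradicting the nondegeneracy
   of f.  Quasi-convenience passes to factors by reading the Cauchy product
   on the coordinate axes. *)

Section GaussLemma.
Variable C : numClosedFieldType.
Local Notation P := {poly {poly C}}.

(* [evY a A] is A(X, a), the specialization of the inner variable Y at a. *)
Local Notation evY a := (map_poly (horner_eval a) : P -> {poly C}).

Local Notation Yfactor a := (('X - a%:P)%:P : P).

(* D is primitive in Y: no linear factor Y - a divides D, i.e. its content
   (the gcd of its coefficients in C[Y]) is a nonzero constant. *)
Definition Yprimitive (D : P) : Prop := forall a : C, evY a D != 0.

Lemma Yfactor_neq0 (a : C) : Yfactor a != 0.
Proof. by rewrite polyC_eq0 polyXsubC_eq0. Qed.

Lemma Yfactor_not_unit (a : C) : Yfactor a \isn't a GRing.unit.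
Proof. by rewrite poly_unitE coefC /= poly_unitE size_XsubC andbF. Qed.

Lemma evY_eq0_factor (a : C) (A : P) :
  evY a A = 0 -> exists A' : P, A = A' * Yfactor a.
Proof.
move=> A_a0; exists (map_poly (fun c => c %/ ('X - a%:P)) A).
apply/polyP => i; rewrite coefMC coef_map_id0 ?div0p //.
have : (evY a A)`_i = 0 by rewrite A_a0 coef0.
rewrite coef_map /= horner_evalE => rootAi.
by rewrite divpK // dvdp_XsubCl /root rootAi.
Qed.

Lemma const_dvd (s : {poly C}) (D A B : P) : s != 0 ->
  (forall a, root s a -> evY a D != 0) -> s%:P * A = D * B ->
  exists Q : P, B = s%:P * Q.
Proof.
have [n] := ubnP (size s); elim: n s A B => // n IH s A B.
rewrite ltnS => sz_s s0 Dnz eAB.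
have [/eqP/size_poly1P [c c0 ->]|s_nc] := eqVneq (size s) 1.
  exists ((c^-1)%:P%:P * B).
  by rewrite mulrA -!polyCM mulfV // mul1r.
have /closed_rootP [a sa] := s_nc.
set s' := s %/ ('X - a%:P).
have es : s = s' * ('X - a%:P) by rewrite divpK // dvdp_XsubCl.
have s'0 : s' != 0 by apply: contraNneq s0 => s'0; rewrite es s'0 mul0r.
have : evY a (D * B) = 0.
  by rewrite -eAB rmorphM /= map_polyC /= horner_evalE (rootP sa) polyC0 mul0r.
rewrite rmorphM => /eqP; rewrite mulf_eq0 (negbTE (Dnz a sa)) /=.
move=> /eqP /evY_eq0_factor [B' eB].
have eAB' : s'%:P * A = D * B'.
  apply: (mulIf (Yfactor_neq0 a)).
  by rewrite mulrAC -polyCM -es eAB eB mulrA.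
have [||Q eQ] := IH s' A B' _ s'0 _ eAB'.
- by move: sz_s; rewrite es size_mul ?polyXsubC_eq0 // size_XsubC addn2.
- by move=> b s'b; apply: Dnz; rewrite es rootM s'b.
by exists Q; rewrite eB eQ es polyCM; ring.
Qed.

Lemma Yprimitive_cancel (s : {poly C}) (D A B : P) :
  Yprimitive D -> s != 0 -> s%:P * A = D * B -> exists Q : P, A = Q * D.
Proof.
move=> Dprim s0 eAB; have [Q eB] := const_dvd s0 (fun a _ => Dprim a) eAB.
exists Q; apply: (mulfI (x := s%:P)); first by rewrite polyC_eq0.
by rewrite eAB eB; ring.
Qed.

Lemma content_decomposition (A : P) : A != 0 ->
  exists (c : {poly C}) (D : P), [/\ c != 0, Yprimitive D & A = c%:P * D].
Proof.
have [n] := ubnP (size (lead_coef A)); elim: n A => // n IH A.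
rewrite ltnS => sz_A A0.
have [[a /evY_eq0_factor [A' eA]]|noroot] := classic (exists a, evY a A = 0);
  last first.
  exists 1, A; split; rewrite ?oner_neq0 ?mul1r // => a.
  by apply/eqP => Aa0; apply: noroot; exists a.
have A'0 : A' != 0 by apply: contraNneq A0 => A'0; rewrite eA A'0 mul0r.
have [|c [D [c0 Dprim eA']]] := IH A' _ A'0.
  move: sz_A; rewrite eA lead_coefM lead_coefC.
  by rewrite size_mul ?lead_coef_eq0 ?polyXsubC_eq0 // size_XsubC addn2.
exists (c * ('X - a%:P)), D; split; rewrite ?mulf_neq0 ?polyXsubC_eq0 //.
by rewrite eA eA' polyCM; ring.
Qed.

(* A coprime pair has a pseudo-gcd of degree 0 in X: the primitive part of the
   gcd divides both polynomials in C[X,Y], hence is a unit. *)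
Lemma coprime_gcdp_size (g D : P) : bcoprime g D -> (size (gcdp g D) <= 1)%N.
Proof.
move=> cop; set d := gcdp g D.
have [->|d0] := eqVneq d 0; first by rewrite size_poly0.
have [e [E [e0 Eprim ed]]] := content_decomposition d0.
have E_dvd G : d %| G -> bdvd E G.
  move=> /Pdiv.Idomain.dvdpP [[c q] /= c0 eG].
  have eG' : c%:P * G = E * (q * e%:P) by rewrite mul_polyC eG ed; ring.
  by have [Q eQ] := Yprimitive_cancel Eprim c0 eG'; exists Q.
have := cop E (E_dvd g (dvdp_gcdl g D)) (E_dvd D (dvdp_gcdr g D)).
by rewrite poly_unitE ed mul_polyC size_scale // => /andP [/eqP ->].
Qed.

(* Coprime polynomials generate an ideal containing a nonzero element of C[Y]
   (their resultant with respect to X, when both have positive X-degree). *)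
Lemma coprime_const_combination (g D : P) : g != 0 -> D != 0 -> bcoprime g D ->
  exists (r : {poly C}) (u v : P), r != 0 /\ r%:P = u * g + v * D.
Proof.
move=> g0 D0 cop.
have [/eqP/size_poly1P [c c0 ->]|g_nc] := eqVneq (size g) 1.
  by exists c, 1, 0; rewrite mul1r mul0r addr0.
have [/eqP/size_poly1P [c c0 ->]|D_nc] := eqVneq (size D) 1.
  by exists c, 0, 1; rewrite mul1r mul0r add0r.
have size_gt1 (A : P) : A != 0 -> size A != 1%N -> (1 < size A)%N.
  by move=> A0 A1; rewrite ltn_neqAle eq_sym A1 size_poly_gt0.
have [[u v] _ /= eres] :=
  resultant_in_ideal (size_gt1 _ g0 g_nc) (size_gt1 _ D0 D_nc).
exists (resultant g D), u, v; split=> //.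
by rewrite resultant_eq0 -leqNgt coprime_gcdp_size.
Qed.

(* Euclid's lemma in C[X,Y]: if h divides k * g and is coprime to g, then h
   divides k.  Write h = c * D with D primitive: D divides k by Gauss, and c
   divides k / D since no root of c kills g. *)
Lemma coprime_dvd (g h k m : P) : g != 0 -> h != 0 -> bcoprime g h ->
  k * g = m * h -> exists q : P, k = q * h.
Proof.
move=> g0 h0 cop ekg.
have [c [D [c0 Dprim eh]]] := content_decomposition h0.
have D0 : D != 0 by apply: contraNneq h0 => D0; rewrite eh D0 mulr0.
have copD : bcoprime g D.
  move=> d dg [x ex]; apply: (cop d dg).
  by exists (x * c%:P); rewrite eh ex; ring.
have [r [u [v [r0 er]]]] := coprime_const_combination g0 D0 copD.
have [Q eQ] : exists Q, k = Q * D.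
  apply: (Yprimitive_cancel Dprim r0 (B := u * m * c%:P + v * k)).
  rewrite er; transitivity (u * (k * g) + v * D * k); first by ring.
  by rewrite ekg eh; ring.
have eQg : c%:P * m = g * Q.
  apply: (mulIf D0); transitivity (m * h); first by rewrite eh; ring.
  by rewrite -ekg eQ; ring.
have gnz a : root c a -> evY a g != 0.
  move=> ca; apply/negP => /eqP /evY_eq0_factor [g' eg].
  have [c' ec] : exists c', c = c' * ('X - a%:P).
    by exists (c %/ ('X - a%:P)); rewrite divpK // dvdp_XsubCl.
  have Yfactor_dvd_h : bdvd (Yfactor a) h.
    by exists (c'%:P * D); rewrite eh ec polyCM; ring.
  have := cop _ (ex_intro _ g' eg) Yfactor_dvd_h.
  by rewrite (negbTE (Yfactor_not_unit a)).
have [Q' eQ'] := const_dvd c0 gnz eQg.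
by exists Q'; rewrite eQ eQ' eh; ring.
Qed.

Lemma coprime_mul_dvd (f g h : P) : f != 0 -> bcoprime g h ->
  bdvd g f -> bdvd h f -> exists n : P, f = n * h * g.
Proof.
move=> f0 cop [k ek] [m em].
have g0 : g != 0 by apply: contraNneq f0 => g0; rewrite ek g0 mulr0.
have h0 : h != 0 by apply: contraNneq f0 => h0; rewrite em h0 mulr0.
have [q eq] := coprime_dvd g0 h0 cop (etrans (esym ek) em).
by exists q; rewrite ek eq.
Qed.

End GaussLemma.

Section InitialForms.
Variable C : numClosedFieldType.
Local Notation P := {poly {poly C}}.
Implicit Types A B : P.

Lemma bcoefM A B a b : bcoef (A * B) a b =
  \sum_(i < a.+1) \sum_(j < b.+1) bcoef A i j * bcoef B (a - i) (b - j).
Proof.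
by rewrite /bcoef coefM coef_sum; apply: eq_bigr => i _; rewrite coefM.
Qed.

Lemma bcoef_inj A B : (forall a b, bcoef A a b = bcoef B a b) -> A = B.
Proof. by move=> eAB; apply/polyP => a; apply/polyP => b; apply: eAB. Qed.

Lemma bcoef_support A a b : bcoef A a b != 0 ->
  (a < size A)%N /\ (b < size (xcoef A a))%N.
Proof.
rewrite /bcoef /xcoef => nz; split; rewrite ltnNge; apply: contra nz => le.
  by rewrite [A`_a]nth_default // coef0.
by rewrite nth_default.
Qed.

Lemma bcoef_neq0_poly A a b : bcoef A a b != 0 -> A != 0.
Proof. by apply: contraNneq => ->; rewrite /bcoef !coef0. Qed.

Lemma poly_neq0_bcoef A : A != 0 -> exists a b, bcoef A a b != 0.
Proof.
move=> A0; exists (size A).-1, (size (lead_coef A)).-1.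
by rewrite /bcoef -!lead_coefE !lead_coef_eq0.
Qed.

Lemma sum_neq0 (R : nmodType) n (F : 'I_n -> R) :
  \sum_i F i != 0 -> exists i, F i != 0.
Proof.
have [i Fi _|F0] := pickP (fun i => F i != 0); first by exists i.
by rewrite big1 ?eqxx // => i _; apply/eqP/negbFE/F0.
Qed.

Lemma attainsP A p q a b :
  reflect (forall a' b', bcoef A a' b' != 0 -> wdeg p q a' b' <= wdeg p q a b)
          (attains_max A p q a b).
Proof.
rewrite /attains_max; apply: (iffP idP) => [H a' b' nz | H].
  have [ha hb] := bcoef_support nz.
  move: H; rewrite big_andE => /forallP /(_ (Ordinal ha)) /=.
  by rewrite big_andE => /forallP /(_ (Ordinal hb)) /= /implyP; apply.
rewrite big_andE; apply/forallP => i /=; rewrite big_andE.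
by apply/forallP => j /=; apply/implyP => nz; apply: H.
Qed.

Definition is_wdeg A (p q m : C) : Prop :=
  (exists a b, bcoef A a b != 0 /\ wdeg p q a b = m) /\
  (forall a b, bcoef A a b != 0 -> wdeg p q a b <= m).

Lemma seq_argmax (T : eqType) (s : seq T) (w : T -> C) x0 :
  (forall x, w x \is Num.real) -> x0 \in s ->
  exists2 x, x \in s & forall y, y \in s -> w y <= w x.
Proof.
move=> wreal; elim: s x0 => [//|x [|z s] IH] x0 _.
  by exists x; rewrite ?mem_head // => y; rewrite inE => /eqP ->.
have [m ms maxm] := IH z (mem_head _ _).
have /orP [le|le] := real_leVge (wreal x) (wreal m).
  exists m; first by rewrite inE ms orbT.
  by move=> y; rewrite inE => /orP [/eqP ->|/maxm].
exists x; first exact: mem_head.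
by move=> y; rewrite inE => /orP [/eqP ->|/maxm/le_trans]; [|apply].
Qed.

Lemma exists_wdeg A (p q : C) : p \is Num.real -> q \is Num.real -> A != 0 ->
  exists m, is_wdeg A p q m.
Proof.
move=> preal qreal A0.
set N := (\max_(i < size A) size (xcoef A i))%N.
set s := [seq x <- [seq (i, j) | i <- iota 0 (size A), j <- iota 0 N]
          | bcoef A x.1 x.2 != 0].
have in_s a b : bcoef A a b != 0 -> (a, b) \in s.
  move=> nz; have [ha hb] := bcoef_support nz.
  rewrite mem_filter nz /=; apply: allpairs_f; rewrite mem_iota /= add0n //.
  apply: leq_trans hb _.
  exact: (@leq_bigmax _ (fun i : 'I_(size A) => size (xcoef A i)) (Ordinal ha)).
have [a1 [b1 nz1]] := poly_neq0_bcoef A0.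
have wreal (x : nat * nat) : wdeg p q x.1 x.2 \is Num.real.
  by rewrite /wdeg realD ?realM ?realn.
have [[a0 b0] s0 max0] := seq_argmax wreal (in_s _ _ nz1).
exists (wdeg p q a0 b0); split.
  by exists a0, b0; move: s0; rewrite mem_filter => /andP [].
by move=> a b nz; apply: (max0 (a, b) (in_s _ _ nz)).
Qed.

Lemma init_form_coef A p q m : is_wdeg A p q m -> forall a b,
  bcoef (init_form A p q) a b = if wdeg p q a b == m then bcoef A a b else 0.
Proof.
move=> [[a0 [b0 [nz0 <-]]] maxA] a b.
rewrite /bcoef /init_form coef_poly; case: ltnP => ha; last first.
  by rewrite [A`_a]nth_default // coef0 if_same.
rewrite coef_poly /xcoef; case: ltnP => hb; last first.
  by rewrite [(A`_a)`_b]nth_default // if_same.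
have [z|nz /=] := eqVneq (A`_a)`_b 0; first by rewrite z if_same.
congr (if _ then _ else _); apply/attainsP/eqP => [maxab|->]; last exact: maxA.
by apply/eqP; rewrite eq_le maxab // maxA.
Qed.

Lemma init_form_neq0 A p q m : is_wdeg A p q m -> init_form A p q != 0.
Proof.
move=> degA; have [[a [b [nz eab]]] _] := degA.
by apply: (@bcoef_neq0_poly _ a b); rewrite (init_form_coef degA) eab eqxx.
Qed.

Lemma wdeg_split (p q : C) a b i j : (i <= a)%N -> (j <= b)%N ->
  wdeg p q i j + wdeg p q (a - i) (b - j) = wdeg p q a b.
Proof. by move=> ia jb; rewrite /wdeg !natrB //; ring. Qed.

Lemma init_formM_coef A B p q mA mB :
  is_wdeg A p q mA -> is_wdeg B p q mB -> forall a b,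
  bcoef (init_form A p q * init_form B p q) a b =
    if wdeg p q a b == mA + mB then bcoef (A * B) a b else 0.
Proof.
move=> degA degB a b; have [_ maxA] := degA; have [_ maxB] := degB.
rewrite !bcoefM; case: ifP => [/eqP top|not_top].
  apply: eq_bigr => i _; apply: eq_bigr => j _.
  rewrite (init_form_coef degA) (init_form_coef degB).
  have [z|nzA] := eqVneq (bcoef A i j) 0; first by rewrite z if_same !mul0r.
  have [z|nzB] := eqVneq (bcoef B (a - i) (b - j)) 0.
    by rewrite z if_same !mulr0.
  have := leifD (leif_eq (maxA _ _ nzA)) (leif_eq (maxB _ _ nzB)).
  rewrite (@wdeg_split p q a b i j (ltn_ord i) (ltn_ord j)) top.
  by move=> /leif_refl /andP [/eqP -> /eqP ->]; rewrite !eqxx.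
rewrite big1 // => i _; rewrite big1 // => j _.
rewrite (init_form_coef degA) (init_form_coef degB).
case: eqP => ei; case: eqP => ej; rewrite ?mul0r ?mulr0 //.
move: not_top; rewrite -(@wdeg_split p q a b i j (ltn_ord i) (ltn_ord j)).
by rewrite ei ej eqxx.
Qed.

Lemma init_formM A B (p q : C) : p \is Num.real -> q \is Num.real ->
  A != 0 -> B != 0 -> init_form (A * B) p q = init_form A p q * init_form B p q.
Proof.
move=> preal qreal A0 B0.
have [mA degA] := exists_wdeg preal qreal A0.
have [mB degB] := exists_wdeg preal qreal B0.
have topM := init_formM_coef degA degB.
have degAB : is_wdeg (A * B) p q (mA + mB).
  split.
    have AB0 := mulf_neq0 (init_form_neq0 degA) (init_form_neq0 degB).
    have [a [b]] := poly_neq0_bcoef AB0.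
    rewrite topM; case: ifP => [/eqP eab nz|_]; last by rewrite eqxx.
    by exists a, b.
  move=> a b; rewrite bcoefM => /sum_neq0 [i /sum_neq0 [j]].
  rewrite mulf_eq0 negb_or => /andP [nzA nzB].
  rewrite -(@wdeg_split p q a b i j (ltn_ord i) (ltn_ord j)).
  by apply: lerD; [apply: degA.2 | apply: degB.2].
by apply: bcoef_inj => a b; rewrite topM (init_form_coef degAB).
Qed.

End InitialForms.

Section Singularity.
Variable C : numClosedFieldType.
Local Notation P := {poly {poly C}}.

Lemma dY_horner (A : P) (x : C) : (dY A).[x%:P] = (A.[x%:P])^`().
Proof.
rewrite /dY (@horner_coef_wide _ (size A)) ?size_poly //.
rewrite horner_coef raddf_sum; apply: eq_bigr => i _.
by rewrite coef_map_id0 ?deriv0 //= -rmorphXn derivM derivC mulr0 addr0.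
Qed.

Lemma common_zero_singular (A B D : P) (x y : C) :
  B.[x%:P].[y] = 0 -> D.[x%:P].[y] = 0 ->
  [/\ (A * B * D).[x%:P].[y] = 0, (dX (A * B * D)).[x%:P].[y] = 0
    & (dY (A * B * D)).[x%:P].[y] = 0].
Proof.
move=> Bxy Dxy; split.
- by rewrite !hornerM Dxy mulr0.
- rewrite /dX !derivM !(hornerD, hornerM) Bxy Dxy.
  by rewrite !(mulr0, mul0r, addr0, add0r).
- rewrite dY_horner !hornerM !derivM !(hornerD, hornerM) Bxy Dxy.
  by rewrite !(mulr0, mul0r, addr0, add0r).
Qed.

End Singularity.

(* A factor of positive degree of a quasi-convenient polynomial is
   quasi-convenient: nonzero terms X^a and Y^b of f = k * g come from
   terms of g on the same axes. *)
Lemma quasi_convenient_dvd (C : numClosedFieldType) (f g k : {poly {poly C}}) :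
  quasi_convenient f -> (0 < tdeg g)%N -> f = k * g -> quasi_convenient g.
Proof.
move=> [f0 [_ [[a fa] [b fb]]]] tg ef.
have g0 : g != 0 by apply: contraNneq f0 => g0; rewrite ef g0 mulr0.
split=> //; split=> //; split.
  move: fa; rewrite ef bcoefM => /sum_neq0 [i /sum_neq0 [j]].
  by rewrite mulf_eq0 negb_or sub0n => /andP [_ nz]; exists (a - i)%N.
move: fb; rewrite ef bcoefM => /sum_neq0 [i /sum_neq0 [j]].
by rewrite mulf_eq0 negb_or sub0n => /andP [_ nz]; exists (b - j)%N.
Qed.

Theorem lemma3p1 (C : numClosedFieldType) (f g h : {poly {poly C}}) :
  nondeg_at_infinity f ->
  (0 < tdeg g)%N -> (0 < tdeg h)%N ->
  bcoprime g h -> bdvd g f -> bdvd h f ->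
  quasi_convenient g /\ quasi_convenient h /\ pair_nondeg_at_infinity g h.
Proof.
move=> [qf nondeg] tg th cop dg dh.
have f0 : f != 0 by case: qf.
have [n ef] := coprime_mul_dvd f0 cop dg dh.
have qg : quasi_convenient g by apply: quasi_convenient_dvd qf tg ef.
have qh : quasi_convenient h.
  by apply: (quasi_convenient_dvd (k := n * g)) qf th _; rewrite ef mulrAC.
have : n * h * g != 0 by rewrite -ef.
rewrite !mulf_eq0 !negb_or => /andP [/andP [n0 h0] g0].
do 4 split=> //.
move=> p q wok [x [y [x0 [y0 [gxy hxy]]]]].
have [preal [qreal _]] := wok.
apply: (nondeg p q wok); exists x, y; do 2 split=> //.
rewrite ef !init_formM ?mulf_neq0 //.
by have [] := common_zero_singular (init_form n p q) hxy gxy.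
Qed.
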